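(* Let $m,a,b,n$ be positive integers with $n\ge 3$ and $(3m+1)/2\le a<b\le (5m-1)/3$. Let $A\subset\mathbb N_+$ with $|A|=n-1$, $\min A=a$, $\max A=b$, such that the sums $x_1+\dots+x_h$, over all $h\in\{1,2,3\}$ and all multisets $\{x_1,\dots,x_h\}$ of elements of $A$, are pairwise distinct modulo $m$. Let $S=\langle\{m\}\cup A\rangle_{4m}$ and $P_4=P\cap[4m,5m-1]$. Then the integer interval $4m+\big[\lfloor (m+1)/3\rfloor,\ \lceil (m-1)/2\rceil\big]$ is contained in $P_4$, and $|P_4|\ge m/6$.
   Context: $\mathbb N=\{0,1,2,\dots\}$, $\mathbb N_+=\mathbb N\setminus\{0\}$; $[x,y]=\{z\in\mathbb Z: x\le z\le y\}$, and $t+[x,y]=\{t+z: z\in[x,y]\}$. For a finite set $B$ of positive integers and a positive integer $t$, $\langle B\rangle_t=\big(\sum_{x\in B}\mathbb N x\big)\cup\{z\in\mathbb Z: z\ge t\}$; this is a numerical semigroup. For a numerical semigroup $S$, let $S^*=S\setminus\{0\}$, $D=S^*+S^*$ and $P=S^*\setminus D$ (the primitive elements). *)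

From mathcomp Require Import all_boot.
Set Implicit Arguments. Unset Strict Implicit. Unset Printing Implicit Defensive.

Definition in_span (B : seq nat) (z : nat) : Prop :=
  exists c : nat -> nat, z = \sum_(x <- B) c x * x.

(* <B>_t = (sum_{x in B} N x) ∪ {z >= t}  (all elements are non-negative, so nat suffices). *)
Definition in_semigroup (B : seq nat) (t : nat) (z : nat) : Prop :=
  in_span B z \/ t <= z.

Definition in_Sstar (B : seq nat) (t : nat) (z : nat) : Prop :=
  in_semigroup B t z /\ z <> 0.

Definition in_D (B : seq nat) (t : nat) (z : nat) : Prop :=
  exists x y, in_Sstar B t x /\ in_Sstar B t y /\ z = x + y.

Definition in_P (B : seq nat) (t : nat) (z : nat) : Prop :=
  in_Sstar B t z /\ ~ in_D B t z.

Definition in_P4 (m : nat) (A : seq nat) (z : nat) : Prop :=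
  in_P (m :: A) (4 * m) z /\ 4 * m <= z <= 5 * m - 1.

From mathcomp Require Import all_boot.
From mathcomp Require Import zify.
From Stdlib Require Import ClassicalEpsilon.

(* Every element of A lies in [(3m+1)/2, (5m-1)/3], so a combination of the
   generators m and A with N summands from A lies in [N a, N b] modulo the
   multiples of m; checking N = 0, 1, 2 and N >= 3 shows that no such
   combination reaches 4m + k for (m+1)/3 <= k <= m/2.  Every nonzero element
   of S is at least m, so an element of D below 5m is a sum of two elements
   below 4m, hence lies in the span; the window 4m + [(m+1)/3, m/2] therefore
   consists of primitive elements, and it has at least m/6 elements. *)

Lemma in_span0 B : in_span B 0.
Proof. by exists (fun=> 0); rewrite big1. Qed.

Lemma in_span_add {B x y} : in_span B x -> in_span B y -> in_span B (x + y).
Proof.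
move=> [cx ->] [cy ->]; exists (fun v => cx v + cy v).
by rewrite -big_split /=; apply: eq_bigr => v _; rewrite mulnDl.
Qed.

Lemma in_span_cons {x B z} :
  in_span (x :: B) z -> exists C y, z = C * x + y /\ in_span B y.
Proof.
move=> [c ->]; rewrite big_cons.
by exists (c x), (\sum_(y <- B) c y * y); split; last exists c.
Qed.

Lemma in_span_bounds {B lo hi z} : (forall x, x \in B -> lo <= x <= hi) ->
  in_span B z -> exists N, lo * N <= z <= hi * N.
Proof.
move=> HB [c ->]; exists (\sum_(x <- B) c x); rewrite !big_distrr /=.
apply/andP; split; rewrite big_seq_cond [X in _ <= X]big_seq_cond;
  apply: leq_sum => x /andP [/HB Hx _]; nia.
Qed.

Lemma in_Sstar_ge {B t g z} : (forall x, x \in B -> g <= x) -> g <= t ->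
  in_Sstar B t z -> g <= z.
Proof.
move=> HB gt [[Hz|tz] nz]; last exact: leq_trans gt tz.
have HB' x : x \in B -> g <= x <= \max_(y <- B) y.
  by move=> xB; rewrite HB //; apply: leq_bigmax_seq.
have [N /andP [lo_z z_hi]] := in_span_bounds HB' Hz.
by case: N lo_z z_hi => [|N]; [lia | nia].
Qed.

Lemma in_D_in_span {B t g z} : (forall x, x \in B -> g <= x) -> g <= t ->
  in_D B t z -> z < t + g -> in_span B z.
Proof.
move=> HB gt [x [y [Hx [Hy ->]]]] lt_z.
have gx := in_Sstar_ge HB gt Hx; have gy := in_Sstar_ge HB gt Hy.
case: Hx Hy => [[sx|?] _] [[sy|?] _]; try lia.
exact: in_span_add.
Qed.

Lemma in_P_of_not_in_span {B t g z} : (forall x, x \in B -> g <= x) -> g <= t ->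
  t <= z < t + g -> ~ in_span B z -> in_P B t z.
Proof.
move=> HB gt /andP [tz zt] nspan; split.
  by split; [right | move=> z0; apply: nspan; rewrite z0; apply: in_span0].
by move/(in_D_in_span HB gt)/(_ zt).
Qed.

Lemma not_in_span_window {m A a b k} : (forall x, x \in A -> a <= x <= b) ->
  3 * m + 1 <= 2 * a -> a <= b -> 3 * b <= 5 * m - 1 ->
  (m + 1) %/ 3 <= k <= (m.-1 + 1) %/ 2 -> ~ in_span (m :: A) (4 * m + k).
Proof.
move=> HA ha ab hb hk /in_span_cons [C [y [E /(in_span_bounds HA) [N hN]]]].
case: N hN => [|[|[|N]]] hN.
- by case: (leqP C 4) => hC; nia.
- by case: (leqP C 2) => hC; nia.
- by case: (leqP C 1) => hC; nia.
- by nia.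
Qed.

Lemma in_P4_window {m A a b} k : (forall x, x \in A -> a <= x <= b) ->
  3 * m + 1 <= 2 * a -> a <= b -> 3 * b <= 5 * m - 1 ->
  (m + 1) %/ 3 <= k <= (m.-1 + 1) %/ 2 -> in_P4 m A (4 * m + k).
Proof.
move=> HA ha ab hb hk; split; last by lia.
have gen_ge_m x : x \in m :: A -> m <= x.
  by rewrite inE => /predU1P [-> // | /HA]; lia.
by apply: (in_P_of_not_in_span gen_ge_m) (not_in_span_window HA ha ab hb hk); lia.
Qed.

Lemma bounded_pred_enum {P : nat -> Prop} {lo n} :
  (forall z, P z -> lo <= z < lo + n) ->
  exists L, uniq L /\ forall z, z \in L <-> P z.
Proof.
move=> HP; pose p z := if excluded_middle_informative (P z) then true else false.
have pP z : p z <-> P z by rewrite /p; case: excluded_middle_informative.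
exists (filter p (iota lo n)); rewrite filter_uniq ?iota_uniq; split=> // z.
rewrite mem_filter mem_iota; split=> [/andP [/pP //] | Pz].
by apply/andP; split; [apply/pP | apply: HP].
Qed.

Theorem mainTheorem8 (m a b n : nat) (A : seq nat) :
  0 < m -> 0 < a -> 0 < b -> 3 <= n ->
  3 * m + 1 <= 2 * a -> a < b -> 3 * b <= 5 * m - 1 ->
  uniq A -> size A = n - 1 -> all (fun x => 0 < x) A ->
  a \in A -> (forall x, x \in A -> a <= x) ->
  b \in A -> (forall x, x \in A -> x <= b) ->
  (forall s t : seq nat,
      0 < size s <= 3 -> 0 < size t <= 3 ->
      all (fun x => x \in A) s -> all (fun x => x \in A) t ->
      ~~ perm_eq s t -> sumn s != sumn t %[mod m]) ->
  (forall k, (m + 1) %/ 3 <= k <= (m.-1 + 1) %/ 2 -> in_P4 m A (4 * m + k)) /\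
  (exists P4 : seq nat, uniq P4 /\ (forall z, z \in P4 <-> in_P4 m A z) /\ m <= 6 * size P4).
Proof.
move=> m0 _ _ _ ha ab hb _ _ _ _ Ha _ Hb _.
have HA x : x \in A -> a <= x <= b by move=> xA; rewrite Ha ?Hb.
have window k := in_P4_window k HA ha (ltnW ab) hb.
split=> //.
have in_P4_bounded z : in_P4 m A z -> 4 * m <= z < 4 * m + m by case=> _; lia.
have [L [uL HL]] := bounded_pred_enum in_P4_bounded.
exists L; do 2!split=> //.
have sub : {subset iota (4 * m + (m + 1) %/ 3)
                      ((m.-1 + 1) %/ 2 - (m + 1) %/ 3 + 1) <= L}.
  move=> z; rewrite mem_iota => /andP [z_lo z_hi]; apply/HL.
  have -> : z = 4 * m + (z - 4 * m) by lia.
  by apply: window; lia.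
have := uniq_leq_size (iota_uniq _ _) sub; rewrite size_iota => le_window.
apply: leq_trans (leq_mul (leqnn 6) le_window); lia.
Qed.
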